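(* Consider the convex program $$\min F(x)\quad\text{subject to } G_i(x)\le b_i\ (i=1,\dots,m),\quad l\le x\le u,$$ with variables $x\in\mathbb{R}^n$, where $F$ and each $G_i$ are convex and differentiable on the box domain $B=\{x: l\le x\le u\}$. Let $(\mathcal{P},\mathcal{Q})$ be a reduction coloring of this program. Then: (i) if $x$ is an optimal solution of the original program, then $x'=\Pi_{\mathcal{Q}}^{\mathrm{Scaled}}x$ is an optimal solution of the reduced program; (ii) if $x'$ is an optimal solution of the reduced program, then $x=\Pi_{\mathcal{Q}}x'$ is an optimal solution of the original program.
   Context: A partition of a finite set $V$ is a set of nonempty pairwise disjoint subsets (''colors'') whose union is $V$. For a partition $\mathcal{Q}$ of $\{1,\dots,n\}$, the partition matrix $\Pi_{\mathcal{Q}}\in\{0,1\}^{n\times|\mathcal{Q}|}$ has $(\Pi_{\mathcal{Q}})_{jT}=1$ if $j\in T$ and $0$ otherwise; $\Pi_{\mathcal{Q}}^{\mathrm{Scaled}}\in\mathbb{R}^{|\mathcal{Q}|\times n}$ is $\Pi_{\mathcal{Q}}^\top$ with each row normalized to sum to $1$, i.e. $(\Pi_{\mathcal{Q}}^{\mathrm{Scaled}})_{Tj}=1/|T|$ if $j\in T$ and $0$ otherwise. A point $\hat x\in\mathbb{R}^n$ is called $\mathcal{Q}$-constant if $\hat x_{j_1}=\hat x_{j_2}$ whenever $j_1,j_2$ lie in the same color of $\mathcal{Q}$. Reduction coloring: a partition $\mathcal{P}$ of the constraint indices $\{1,\dots,m\}$ and a partition $\mathcal{Q}$ of the variable indices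 $\{1,\dots,n\}$ form a reduction coloring if (a) for each $T\in\mathcal{Q}$, $(l_j,u_j)$ is the same for all $j\in T$; (b) for each $S\in\mathcal{P}$, $b_i$ is the same for all $i\in S$; and for every $\mathcal{Q}$-constant $\hat x\in B$: (c) for each $T\in\mathcal{Q}$ and $j_1,j_2\in T$, $\partial F/\partial x_{j_1}(\hat x)=\partial F/\partial x_{j_2}(\hat x)$; (d) for each $S\in\mathcal{P}$, $T\in\mathcal{Q}$ and $j_1,j_2\in T$, $\partial(\sum_{i\in S}G_i)/\partial x_{j_1}(\hat x)=\partial(\sum_{i\in S}G_i)/\partial x_{j_2}(\hat x)$; (e) for each $S\in\mathcal{P}$, $G_i(\hat x)$ is the same for all $i\in S$. Reduced program: variables $x'\in\mathbb{R}^{|\mathcal{Q}|}$; objective $F'(x')=F(\Pi_{\mathcal{Q}}x')$; for each $S\in\mathcal{P}$ one constraint $G'_S(x')=G_i(\Pi_{\mathcal{Q}}x')\le b'_S$ (any $i\in S$; well defined by (e)), where $b'=\Pi_{\mathcal{P}}^{\mathrm{Scaled}}b$; box constraints $l'\le x'\le u'$ with $l'=\Pi_{\mathcal{Q}}^{\mathrm{Scaled}}l$, $u'=\Pi_{\mathcal{Q}}^{\mathrm{Scaled}}u$. *)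

From HB Require Import structures.
From mathcomp Require Import all_boot all_order all_algebra.
From mathcomp Require Import all_classical all_reals.
From mathcomp Require Import topology normedtype derive.
Set Implicit Arguments. Unset Strict Implicit. Unset Printing Implicit Defensive.
Import Order.TTheory GRing.Theory Num.Theory.
Import numFieldNormedType.Exports.
Local Open Scope ring_scope.

Section Defs.
Variable R : realType.

Definition in_box (k : nat) (l u x : 'cV[R]_k) : Prop :=
  forall j : 'I_k, l j 0 <= x j 0 <= u j 0.

Definition convex_on_box (k : nat) (l u : 'cV[R]_k) (f : 'cV[R]_k -> R) : Prop :=
  forall x y : 'cV[R]_k, in_box l u x -> in_box l u y ->
  forall t : R, 0 <= t <= 1 ->
    f (t *: x + (1 - t) *: y) <= t * f x + (1 - t) * f y.

Definition differentiable_on_box (k : nat) (l u : 'cV[R]_k) (f : 'cV[R]_k -> R)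
  : Prop := forall x : 'cV[R]_k, in_box l u x -> differentiable f x.

Definition partial (k : nat) (f : 'cV[R]_k -> R) (j : 'I_k) (x : 'cV[R]_k) : R :=
  'D_(delta_mx j 0 : 'cV[R]_k) f x.

Definition feasible (k : nat) (I : finType) (g : I -> 'cV[R]_k -> R) (c : I -> R)
  (l u x : 'cV[R]_k) : Prop :=
  (forall i : I, g i x <= c i) /\ in_box l u x.

Definition optimal (k : nat) (I : finType) (f : 'cV[R]_k -> R)
  (g : I -> 'cV[R]_k -> R) (c : I -> R) (l u x : 'cV[R]_k) : Prop :=
  feasible g c l u x /\
  forall y : 'cV[R]_k, feasible g c l u y -> f x <= f y.

Definition color (T : finType) (Q : {set {set T}}) (k : 'I_#|Q|) : {set T} :=
  enum_val k.

Definition part_mx (n : nat) (Q : {set {set 'I_n}}) : 'M[R]_(n, #|Q|) :=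
  \matrix_(j < n, k < #|Q|) (j \in color k)%:R.

Definition part_mx_scaled (n : nat) (Q : {set {set 'I_n}}) : 'M[R]_(#|Q|, n) :=
  \matrix_(k < #|Q|, j < n) ((j \in color k)%:R / #|color k|%:R).

Definition Q_constant (n : nat) (Q : {set {set 'I_n}}) (x : 'cV[R]_n) : Prop :=
  forall T, T \in Q -> forall j1 j2, j1 \in T -> j2 \in T -> x j1 0 = x j2 0.

Definition reduction_coloring (m n : nat) (F : 'cV[R]_n -> R)
  (G : 'I_m -> 'cV[R]_n -> R) (b : 'cV[R]_m) (l u : 'cV[R]_n)
  (P : {set {set 'I_m}}) (Q : {set {set 'I_n}}) : Prop :=
  finset.partition P [set: 'I_m] /\ finset.partition Q [set: 'I_n] /\
  (forall T, T \in Q -> forall j1 j2, j1 \in T -> j2 \in T ->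
     l j1 0 = l j2 0 /\ u j1 0 = u j2 0) /\
  (forall S, S \in P -> forall i1 i2, i1 \in S -> i2 \in S -> b i1 0 = b i2 0) /\
  (forall xh : 'cV[R]_n, Q_constant Q xh -> in_box l u xh ->
    (forall T, T \in Q -> forall j1 j2, j1 \in T -> j2 \in T ->
       partial F j1 xh = partial F j2 xh) /\
    (forall S, S \in P -> forall T, T \in Q -> forall j1 j2, j1 \in T -> j2 \in T ->
       partial (fun x => \sum_(i in S) G i x) j1 xh =
       partial (fun x => \sum_(i in S) G i x) j2 xh) /\
    (forall S, S \in P -> forall i1 i2, i1 \in S -> i2 \in S -> G i1 xh = G i2 xh)).

(* the reduced program; rep k is the chosen representative i of color k of P *)
Definition reduced_optimal (m n : nat) (F : 'cV[R]_n -> R)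
  (G : 'I_m -> 'cV[R]_n -> R) (b : 'cV[R]_m) (l u : 'cV[R]_n)
  (P : {set {set 'I_m}}) (Q : {set {set 'I_n}}) (rep : 'I_#|P| -> 'I_m)
  (x' : 'cV[R]_#|Q|) : Prop :=
  optimal (fun y => F (part_mx Q *m y))
          (fun k y => G (rep k) (part_mx Q *m y))
          (fun k => (part_mx_scaled P *m b) k 0)
          (part_mx_scaled Q *m l) (part_mx_scaled Q *m u) x'.

End Defs.
Arguments reduced_optimal {R m n} F G b l u P Q rep x'.
Arguments reduction_coloring {R m n} F G b l u P Q.
Arguments part_mx {R n} Q.
Arguments part_mx_scaled {R n} Q.

From HB Require Import structures.
From mathcomp Require Import all_boot all_order all_algebra.
From mathcomp Require Import all_classical all_reals.
From mathcomp Require Import topology normedtype derive.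
From mathcomp Require Import ring.
Set Implicit Arguments. Unset Strict Implicit. Unset Printing Implicit Defensive.
Import Order.TTheory GRing.Theory Num.Theory.
Import numFieldNormedType.Exports.
Local Open Scope ring_scope.
Local Open Scope classical_set_scope.

(* Averaging a point over the colors of Q, y |-> Pi_Q Pi_Q^Scaled y, maps
   feasible points to feasible points without increasing the objective: by
   the first-order condition for convex functions, f y >= f (avg y) +
   <grad f (avg y), y - avg y>, and the inner product vanishes because the
   gradient at the Q-constant point avg y is constant on each color while
   y - avg y sums to zero on each color.  The same argument, applied to the
   sum of the constraints of a color S of P (which are all equal at avg y),
   shows that avg y is feasible.  Since the feasible points of the reduced
   program are exactly the preimages under Pi_Q of the Q-constant feasible
   points of the original one, optimality transfers in both directions. *)

Section ConvexOnBox.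
Variables (R : realType) (k : nat).
Implicit Types (l u x y : 'cV[R]_k) (f : 'cV[R]_k -> R).

Lemma convex_on_box_derive_le l u f x y :
  convex_on_box l u f -> differentiable f x ->
  in_box l u x -> in_box l u y -> f x + 'D_(y - x) f x <= f y.
Proof.
move=> cvx_f df x_box y_box; rewrite -lerBrDl.
have Df : (fun h : R => h^-1 *: ((f \o shift x) (h *: (y - x)) - f x)) @ 0^'
    --> 'D_(y - x) f x by exact: diff_derivable.
have Df_right : (fun h : R => h^-1 *: ((f \o shift x) (h *: (y - x)) - f x))
    @ 0^'+ --> 'D_(y - x) f x.
  move=> U /Df; rewrite !near_simpl /= !near_withinE.
  by apply: filterS => h Uh h_gt0; apply: Uh; rewrite gt_eqF.
(* For 0 < h < 1 convexity bounds the difference quotient by f y - f x. *)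
apply: (cvgr_to_le Df_right); near=> h.
have h_gt0 : 0 < h by near: h; exact: nbhs_right_gt.
have h_lt1 : h < 1 by near: h; exact: nbhs_right_lt.
rewrite /= -[_ *: _]/(h^-1 * _) ler_pdivrMl // lerBlDl.
have -> : h *: (y - x) + x = h *: y + (1 - h) *: x.
  by rewrite scalerBr scalerBl scale1r -addrA [- _ + x]addrC.
apply: le_trans (cvx_f _ _ y_box x_box h _) _; first by rewrite !ltW.
by rewrite le_eqVlt; apply/orP; left; apply/eqP; ring.
Unshelve. all: by end_near. Qed.

Lemma derive_partialE f x v : differentiable f x ->
  'D_v f x = \sum_j v j 0 * partial f j x.
Proof.
move=> df; rewrite /partial deriveE // {1}(matrix_sum_delta v) linear_sum.
by apply: eq_bigr => j _; rewrite big_ord1 linearZ /= deriveE.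
Qed.

Lemma differentiable_sum_in (I : finType) (S : {set I}) (g : I -> 'cV[R]_k -> R) x :
  (forall i, differentiable (g i) x) ->
  differentiable (fun y => \sum_(i in S) g i y) x.
Proof.
move=> dg; rewrite -fct_sumE.
by elim/big_ind: _ => // f1 f2 df1 df2; exact: differentiableD.
Qed.

Lemma convex_on_box_sum_in (I : finType) (S : {set I}) (g : I -> 'cV[R]_k -> R) l u :
  (forall i, convex_on_box l u (g i)) ->
  convex_on_box l u (fun y => \sum_(i in S) g i y).
Proof.
move=> cvx_g x y x_box y_box t t01; rewrite !mulr_sumr -big_split.
by apply: ler_sum => i _; exact: cvx_g.
Qed.

End ConvexOnBox.

Section Coloring.
Variables (R : realType) (p : nat) (Q : {set {set 'I_p}}).
Hypothesis Q_partition : finset.partition Q [set: 'I_p].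

Lemma color_in (c : 'I_#|Q|) : color c \in Q.
Proof. exact: enum_valP. Qed.

Lemma colorP T : T \in Q -> exists c : 'I_#|Q|, color c = T.
Proof. by move=> TQ; exists (enum_rank_in TQ T); rewrite /color enum_rankK_in. Qed.

Lemma mem_some_color j : exists c : 'I_#|Q|, j \in color c.
Proof.
case/and3P: Q_partition => /eqP cover_Q _ _.
have : j \in finset.cover Q by rewrite cover_Q inE.
by case/finset.bigcupP => T /colorP [c <-] jT; exists c.
Qed.

Lemma color_mem_inj j (c1 c2 : 'I_#|Q|) : j \in color c1 -> j \in color c2 -> c1 = c2.
Proof.
case/and3P: Q_partition => _ triv_Q _ j_c1 j_c2; apply: enum_val_inj.
have := def_pblock triv_Q (color_in c1) j_c1.
by rewrite (def_pblock triv_Q (color_in c2) j_c2).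
Qed.

Lemma card_color_gt0 (c : 'I_#|Q|) : (0 < #|color c|)%N.
Proof.
case/and3P: Q_partition => _ _ Q_no0; rewrite card_gt0; apply: contraNneq Q_no0 => <-.
exact: color_in.
Qed.

Lemma color_nonempty (c : 'I_#|Q|) : exists j, j \in color c.
Proof. by apply/set0Pn; rewrite -card_gt0 card_color_gt0. Qed.

Lemma part_mxE (x' : 'cV[R]_#|Q|) j (c : 'I_#|Q|) : j \in color c ->
  (part_mx Q *m x') j 0 = x' c 0.
Proof.
move=> j_c; rewrite mxE (bigD1 c) //= big1 ?addr0; first by rewrite mxE j_c mul1r.
move=> c' c'_neq; rewrite mxE; have [j_c'|] := boolP (j \in color c'); last by rewrite mul0r.
by case/eqP: c'_neq; exact: color_mem_inj j_c' j_c.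
Qed.

Lemma part_mx_scaledE (y : 'cV[R]_p) (c : 'I_#|Q|) :
  (part_mx_scaled Q *m y) c 0 = (\sum_(j in color c) y j 0) / #|color c|%:R.
Proof.
rewrite mxE mulr_suml [RHS]big_mkcond /=; apply: eq_bigr => j _; rewrite mxE.
by case: (j \in color c); rewrite ?mul0r ?div0r // mul1r mulrC.
Qed.

Lemma sum_over_colors (a : 'I_p -> R) :
  \sum_j a j = \sum_(c < #|Q|) \sum_(j in color c) a j.
Proof.
under [RHS]eq_bigr => c _ do rewrite big_mkcond.
rewrite exchange_big; apply: eq_bigr => j _.
have [c j_c] := mem_some_color j; rewrite (bigD1 c) //= j_c big1 ?addr0 //.
by move=> c' c'_neq; case: ifP => // j_c'; case/eqP: c'_neq; exact: color_mem_inj j_c' j_c.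
Qed.

Lemma part_mx_scaled_const (y : 'cV[R]_p) (c : 'I_#|Q|) a :
  (forall j, j \in color c -> y j 0 = a) -> (part_mx_scaled Q *m y) c 0 = a.
Proof.
move=> y_c; rewrite part_mx_scaledE (eq_bigr (fun _ => a)) // sumr_const -[a *+ _]mulr_natr.
by rewrite mulfK // pnatr_eq0 -lt0n card_color_gt0.
Qed.

Lemma part_mx_scaled_le (y z : 'cV[R]_p) (c : 'I_#|Q|) :
  (forall j, j \in color c -> y j 0 <= z j 0) ->
  (part_mx_scaled Q *m y) c 0 <= (part_mx_scaled Q *m z) c 0.
Proof.
by move=> yz; rewrite !part_mx_scaledE ler_wpM2r ?invr_ge0 ?ler0n //; exact: ler_sum.
Qed.

Lemma part_mx_Q_constant (x' : 'cV[R]_#|Q|) : Q_constant Q (part_mx Q *m x').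
Proof.
by move=> _ /colorP [c <-] j1 j2 j1_c j2_c; rewrite (part_mxE _ j1_c) (part_mxE _ j2_c).
Qed.

Local Notation avg y := (part_mx Q *m (part_mx_scaled Q *m y)).

Section BoxConstantOnColors.
Variables (l u : 'cV[R]_p).
Hypothesis box_const : forall T, T \in Q -> forall j1 j2, j1 \in T -> j2 \in T ->
  l j1 0 = l j2 0 /\ u j1 0 = u j2 0.

Lemma in_box_part_mx (x' : 'cV[R]_#|Q|) :
  in_box l u (part_mx Q *m x') <->
  in_box (part_mx_scaled Q *m l) (part_mx_scaled Q *m u) x'.
Proof.
have bndE c j : j \in color c ->
    (part_mx_scaled Q *m l) c 0 = l j 0 /\ (part_mx_scaled Q *m u) c 0 = u j 0.
  move=> j_c; split; apply: part_mx_scaled_const => j' j'_c;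
    by case: (box_const (color_in c) j'_c j_c).
split=> x_box.
  move=> c; have [j j_c] := color_nonempty c; have [-> ->] := bndE _ _ j_c.
  by rewrite -(part_mxE x' j_c); exact: x_box.
move=> j; have [c j_c] := mem_some_color j; have [<- <-] := bndE _ _ j_c.
by rewrite (part_mxE _ j_c); exact: x_box.
Qed.

Lemma in_box_color_avg (y : 'cV[R]_p) :
  in_box l u y -> in_box l u (avg y).
Proof.
move=> y_box; apply/in_box_part_mx => c.
by apply/andP; split; apply: part_mx_scaled_le => j _; case/andP: (y_box j).
Qed.

End BoxConstantOnColors.

Lemma color_avg_le (l u : 'cV[R]_p) (f : 'cV[R]_p -> R) (y : 'cV[R]_p) :
  convex_on_box l u f -> differentiable f (avg y) ->
  (forall T, T \in Q -> forall j1 j2, j1 \in T -> j2 \in T ->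
     partial f j1 (avg y) = partial f j2 (avg y)) ->
  in_box l u y -> in_box l u (avg y) -> f (avg y) <= f y.
Proof.
move=> cvx_f df grad_const y_box avg_box.
apply: le_trans (convex_on_box_derive_le cvx_f df avg_box y_box).
rewrite derive_partialE // sum_over_colors big1 ?addr0 // => c _.
have [j0 j0_c] := color_nonempty c.
rewrite (eq_bigr (fun j => (y j 0 - (part_mx_scaled Q *m y) c 0) * partial f j0 (avg y))).
  rewrite -mulr_suml sumrB sumr_const part_mx_scaledE -[_ *+ _]mulr_natr.
  rewrite divfK ?subrr ?mul0r //.
  by rewrite pnatr_eq0 -lt0n card_color_gt0.
move=> j j_c; have -> : (y - avg y) j 0 = y j 0 - avg y j 0 by rewrite !mxE.
by rewrite (part_mxE _ j_c) (grad_const _ (color_in c) j j0 j_c j0_c).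
Qed.

End Coloring.

Section Reduction.
Variables (R : realType) (m n : nat) (F : 'cV[R]_n -> R) (G : 'I_m -> 'cV[R]_n -> R).
Variables (b : 'cV[R]_m) (l u : 'cV[R]_n).
Variables (P : {set {set 'I_m}}) (Q : {set {set 'I_n}}) (rep : 'I_#|P| -> 'I_m).

Hypotheses (F_convex : convex_on_box l u F) (G_convex : forall i, convex_on_box l u (G i)).
Hypotheses (F_diff : differentiable_on_box l u F)
  (G_diff : forall i, differentiable_on_box l u (G i)).
Hypotheses (P_partition : finset.partition P [set: 'I_m])
  (Q_partition : finset.partition Q [set: 'I_n]).
Hypothesis box_const : forall T, T \in Q -> forall j1 j2, j1 \in T -> j2 \in T ->
  l j1 0 = l j2 0 /\ u j1 0 = u j2 0.
Hypothesis b_const :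
  forall S, S \in P -> forall i1 i2, i1 \in S -> i2 \in S -> b i1 0 = b i2 0.
Hypothesis F_partial_const : forall xh, Q_constant Q xh -> in_box l u xh ->
  forall T, T \in Q -> forall j1 j2, j1 \in T -> j2 \in T ->
  partial F j1 xh = partial F j2 xh.
Hypothesis G_sum_partial_const : forall xh, Q_constant Q xh -> in_box l u xh ->
  forall S, S \in P -> forall T, T \in Q -> forall j1 j2, j1 \in T -> j2 \in T ->
  partial (fun x => \sum_(i in S) G i x) j1 xh =
  partial (fun x => \sum_(i in S) G i x) j2 xh.
Hypothesis G_const : forall xh, Q_constant Q xh -> in_box l u xh ->
  forall S, S \in P -> forall i1 i2, i1 \in S -> i2 \in S -> G i1 xh = G i2 xh.
Hypothesis rep_color : forall c, rep c \in color c.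

Local Notation feasible_orig := (feasible G (fun i => b i 0) l u).
Local Notation feasible_red := (feasible (fun c y => G (rep c) (part_mx Q *m y))
  (fun c => (part_mx_scaled P *m b) c 0)
  (part_mx_scaled Q *m l) (part_mx_scaled Q *m u)).
Local Notation avg y := (part_mx Q *m (part_mx_scaled Q *m y)).

Lemma feasible_redE (y' : 'cV[R]_#|Q|) : feasible_red y' <-> feasible_orig (part_mx Q *m y').
Proof.
have b_redE c i : i \in color c -> (part_mx_scaled P *m b) c 0 = b i 0.
  move=> i_c; apply: part_mx_scaled_const => // i' i'_c.
  exact: b_const (color_in c) _ _ i'_c i_c.
split=> [[G_le y'_box] | [G_le y_box]]; last first.
  by split=> [c|]; [rewrite (b_redE _ _ (rep_color c)) | apply/in_box_part_mx].
have y_box : in_box l u (part_mx Q *m y') by apply/(in_box_part_mx Q_partition box_const).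
split=> // i; have [c i_c] := mem_some_color P_partition i.
rewrite -(b_redE _ _ i_c) (G_const (part_mx_Q_constant Q_partition y') y_box (color_in c)
  i_c (rep_color c)).
exact: G_le.
Qed.

Lemma color_avg_feasible (y : 'cV[R]_n) : feasible_orig y -> feasible_orig (avg y).
Proof.
move=> [G_le y_box]; have avg_box := in_box_color_avg Q_partition box_const y_box.
have avg_const := part_mx_Q_constant Q_partition (part_mx_scaled Q *m y).
split=> // i; have [c i_c] := mem_some_color P_partition i.
have sum_le : \sum_(i' in color c) G i' (avg y) <= \sum_(i' in color c) b i' 0.
  apply: le_trans (ler_sum _ (fun i' _ => G_le i')).
  apply: (color_avg_le Q_partition (f := fun x => \sum_(i' in color c) G i' x) _ _ _
    y_box avg_box).
  - exact: convex_on_box_sum_in.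
  - by apply: differentiable_sum_in => i'; exact: G_diff.
  - exact: G_sum_partial_const (color_in c).
have sum_constE (a : 'I_m -> R) : (forall i', i' \in color c -> a i' = a i) ->
    \sum_(i' in color c) a i' = #|color c|%:R * a i.
  by move=> a_const; rewrite (eq_bigr (fun _ => a i)) // sumr_const mulr_natl.
move: sum_le; rewrite !sum_constE => [|i' i'_c|i' i'_c].
- by rewrite ler_pM2l // ltr0n card_color_gt0.
- exact: b_const (color_in c) _ _ i'_c i_c.
- exact: G_const (color_in c) _ _ i'_c i_c.
Qed.

Lemma color_avg_objective_le (y : 'cV[R]_n) : feasible_orig y -> F (avg y) <= F y.
Proof.
move=> [_ y_box]; have avg_box := in_box_color_avg Q_partition box_const y_box.
apply: (color_avg_le Q_partition F_convex _ _ y_box avg_box); first exact: F_diff.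
exact: F_partial_const (part_mx_Q_constant Q_partition _) avg_box.
Qed.

Lemma reduced_optimal_of_optimal (x : 'cV[R]_n) : optimal F G (fun i => b i 0) l u x ->
  reduced_optimal F G b l u P Q rep (part_mx_scaled Q *m x).
Proof.
move=> [x_feas x_min]; split; first exact/feasible_redE/color_avg_feasible.
move=> y' /feasible_redE y_feas.
exact: le_trans (color_avg_objective_le x_feas) (x_min _ y_feas).
Qed.

Lemma optimal_of_reduced_optimal (x' : 'cV[R]_#|Q|) :
  reduced_optimal F G b l u P Q rep x' -> optimal F G (fun i => b i 0) l u (part_mx Q *m x').
Proof.
move=> [x'_feas x'_min]; split; first exact/feasible_redE.
move=> y y_feas; apply: le_trans (color_avg_objective_le y_feas).
exact/x'_min/feasible_redE/color_avg_feasible.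
Qed.

End Reduction.

Theorem theorem1 (R : realType) (m n : nat) (F : 'cV[R]_n -> R)
  (G : 'I_m -> 'cV[R]_n -> R) (b : 'cV[R]_m) (l u : 'cV[R]_n)
  (P : {set {set 'I_m}}) (Q : {set {set 'I_n}}) (rep : 'I_#|P| -> 'I_m) :
  convex_on_box l u F -> (forall i, convex_on_box l u (G i)) ->
  differentiable_on_box l u F -> (forall i, differentiable_on_box l u (G i)) ->
  reduction_coloring F G b l u P Q ->
  (forall k, rep k \in color k) ->
  (forall x : 'cV[R]_n, optimal F G (fun i => b i 0) l u x ->
     reduced_optimal F G b l u P Q rep (part_mx_scaled Q *m x)) /\
  (forall x' : 'cV[R]_#|Q|, reduced_optimal F G b l u P Q rep x' ->
     optimal F G (fun i => b i 0) l u (part_mx Q *m x')).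
Proof.
move=> F_convex G_convex F_diff G_diff [P_part [Q_part [box_const [b_const at_Q_const]]]]
  rep_color.
have F_partial_const xh qc bx := (at_Q_const xh qc bx).1.
have G_sum_partial_const xh qc bx := (at_Q_const xh qc bx).2.1.
have G_const xh qc bx := (at_Q_const xh qc bx).2.2.
split=> x.
- exact: (reduced_optimal_of_optimal F_convex G_convex F_diff G_diff P_part Q_part
    box_const b_const F_partial_const G_sum_partial_const G_const rep_color).
- exact: (optimal_of_reduced_optimal F_convex G_convex F_diff G_diff P_part Q_part
    box_const b_const F_partial_const G_sum_partial_const G_const rep_color).
Qed.
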